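(* Let $m_1,m_2$ be positive integers, $r$ a real number with $0<|r|<1$, $d$ a positive integer, and ${\mathfrak p}(t)=(1+rt)^d$. Define $g:{\mathbb R}^2\to{\mathbb R}$ by $$g(t,k)=\begin{cases}2\,\dfrac{(\frac1{m_1}+\frac1{m_2})e^{-kt}-(\frac{e^k}{m_1}+\frac{e^{-k}}{m_2})}{e^k-e^{-k}}, & k\neq0,\\[2mm] \dfrac{1-t}{m_2}-\dfrac{1+t}{m_1}, & k=0.\end{cases}$$ Then there exists a unique $k_{m_1,m_2}\in{\mathbb R}$ such that $\int_{-1}^1 g(t,k_{m_1,m_2})\,{\mathfrak p}(t)\,dt=0$. *)

From Stdlib Require Import Reals.
Open Scope R_scope.

Definition gfun (m1 m2 t k : R) : R :=
  if Req_EM_T k 0 then (1 - t) / m2 - (1 + t) / m1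
  else 2 * (((1 / m1 + 1 / m2) * exp (- k * t) - (exp k / m1 + exp (- k) / m2))
            / (exp k - exp (- k))).

Definition pfun (r : R) (d : nat) (t : R) : R := (1 + r * t) ^ d.

From Stdlib Require Import Reals Lra Psatz.
From Coquelicot Require Import Coquelicot.
Open Scope R_scope.

(* With [h u s = (exp (u s) - 1) / (exp u - 1)] and [s = (1 - t) / 2] one has
   [g (t, k) = - 2 / m1 + 2 (1 / m1 + 1 / m2) h (2 k) s].  By strict convexity of
   [exp], [h u s] is strictly decreasing in [u] for [0 < s < 1]; since [p > 0] on
   [[-1, 1]], the moment [F k = int_{-1}^1 g (t, k) p t dt] is continuous and
   strictly decreasing.  For large [k] the bound [h (2 k) s <= 2 exp (- k (1 + t))]
   makes [F k < 0], and the symmetry [g_{m1,m2} (t, k) = - g_{m2,m1} (- t, - k)]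
   (with [r] replaced by [- r]) turns this into [F k > 0] for very negative [k].
   The intermediate value theorem gives the unique zero. *)

Lemma exp_convex_lt (x s : R) : x <> 0 -> 0 < s < 1 ->
  exp (s * x) < s * exp x + (1 - s).
Proof.
  intros Hx Hs.
  assert (Hsx : exp x = exp (s * x) * exp ((1 - s) * x)).
  { rewrite <- exp_plus. f_equal. ring. }
  assert (Hone : exp (s * x) * exp (- (s * x)) = 1).
  { rewrite <- exp_plus, Rplus_opp_r. apply exp_0. }
  assert (L1 : 1 + (1 - s) * x < exp ((1 - s) * x)).
  { apply exp_ineq1. intros H. apply Rmult_integral in H as [H|H]; lra. }
  assert (L2 : 1 + - (s * x) < exp (- (s * x))).
  { apply exp_ineq1. intros H. assert (s * x = 0) as H0 by lra.
    apply Rmult_integral in H0 as [H0|H0]; lra. }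
  set (e := exp (s * x)) in *. assert (0 < e) by apply exp_pos.
  assert (0 < s * e) by nra. assert (0 < (1 - s) * e) by nra.
  rewrite Hsx. nra.
Qed.

Definition exprel (x : R) : R := if Req_EM_T x 0 then 1 else (exp x - 1) / x.

Lemma exprel_neq0 (x : R) : x <> 0 -> exprel x = (exp x - 1) / x.
Proof. intros Hx. unfold exprel. now destruct (Req_EM_T x 0). Qed.

Lemma exprel_pos (x : R) : 0 < exprel x.
Proof.
  unfold exprel. destruct (Req_EM_T x 0) as [_|Hx]; [lra|].
  pose proof (exp_ineq1 x Hx).
  destruct (Rlt_or_le 0 x) as [Hp|Hn].
  - apply Rdiv_lt_0_compat; lra.
  - replace ((exp x - 1) / x) with ((1 - exp x) / - x) by (field; exact Hx).
    assert (exp x < exp 0) by (apply exp_increasing; lra).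
    rewrite exp_0 in H0. apply Rdiv_lt_0_compat; lra.
Qed.

(* At 0 this is the derivative of [exp] at 0. *)
Lemma continuous_exprel (x : R) : continuous exprel x.
Proof.
  destruct (Req_dec x 0) as [->|Hx].
  - apply continuity_pt_filterlim. intros eps Heps.
    destruct (derivable_pt_lim_exp_0 eps Heps) as [delta Hd].
    exists delta. split; [apply cond_pos|].
    intros y [[_ Hy0] Hy]. simpl in Hy. unfold R_dist in Hy. rewrite Rminus_0_r in Hy.
    rewrite exprel_neq0 by auto. unfold exprel. destruct (Req_EM_T 0 0) as [_|]; [|easy].
    specialize (Hd y (not_eq_sym Hy0) Hy). now rewrite Rplus_0_l, exp_0 in Hd.
  - apply (continuous_ext_loc _ (fun y => (exp y - 1) / y)).
    + exists (mkposreal _ (Rabs_pos_lt x Hx)). intros y Hy.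
      symmetry. apply exprel_neq0. intros ->.
      change (Rabs (0 - x) < Rabs x) in Hy. rewrite Rminus_0_l, Rabs_Ropp in Hy. lra.
    + apply (ex_derive_continuous (K := R_AbsRing) (V := R_NormedModule)).
      auto_derive. exact Hx.
Qed.

(* [(exp (u s) - 1) / (exp u - 1)], extended by continuity to [s] at [u = 0]. *)
Definition exp_frac (u s : R) : R := s * exprel (u * s) / exprel u.

Lemma exp_frac_0 (s : R) : exp_frac 0 s = s.
Proof. unfold exp_frac, exprel. rewrite Rmult_0_l. destruct (Req_EM_T 0 0); [field | easy]. Qed.

Lemma exp_minus_1_neq0 (u : R) : u <> 0 -> exp u - 1 <> 0.
Proof. intros Hu H. apply Hu, exp_inv. rewrite exp_0. lra. Qed.

Lemma exp_frac_neq0 (u s : R) : u <> 0 ->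
  exp_frac u s = (exp (u * s) - 1) / (exp u - 1).
Proof.
  intros Hu. pose proof (exp_minus_1_neq0 u Hu).
  unfold exp_frac. rewrite (exprel_neq0 u Hu).
  destruct (Req_dec s 0) as [->|Hs].
  - rewrite Rmult_0_r, exp_0. field. auto.
  - rewrite exprel_neq0 by (intros H0; apply Rmult_integral in H0 as [|]; auto).
    field. auto.
Qed.

Lemma exp_frac_lt_id (u s : R) : 0 < u -> 0 < s < 1 -> exp_frac u s < s.
Proof.
  intros Hu Hs. rewrite exp_frac_neq0 by lra.
  pose proof (exp_convex_lt u s ltac:(lra) Hs).
  pose proof (exp_increasing 0 u Hu). rewrite exp_0 in H0.
  rewrite (Rmult_comm u s). apply Rlt_div_l; lra.
Qed.

Lemma exp_frac_gt_id (u s : R) : u < 0 -> 0 < s < 1 -> s < exp_frac u s.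
Proof.
  intros Hu Hs. rewrite exp_frac_neq0 by lra.
  pose proof (exp_convex_lt u s ltac:(lra) Hs).
  pose proof (exp_increasing u 0 Hu). rewrite exp_0 in H0.
  replace ((exp (u * s) - 1) / (exp u - 1)) with ((1 - exp (u * s)) / (1 - exp u))
    by (field; lra).
  rewrite (Rmult_comm u s). apply Rlt_div_r; lra.
Qed.

(* The derivative in [u] has the sign of [exp ((1-s) u) - (1-s) exp u - s],
   negative by convexity. *)
Lemma exp_frac_decreasing_on (a b : Rbar) (s : R) :
  (forall u : R, Rbar_lt a u -> Rbar_lt u b -> u <> 0) -> 0 < s < 1 ->
  forall u1 u2 : R, Rbar_lt a u1 -> u1 < u2 -> Rbar_lt u2 b ->
  exp_frac u2 s < exp_frac u1 s.
Proof.
  intros Hab Hs u1 u2 Hu1 H12 Hu2.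
  assert (Hu2' : Rbar_lt a u2) by (destruct a; simpl in *; try easy; lra).
  assert (Hu1' : Rbar_lt u1 b) by (destruct b; simpl in *; try easy; lra).
  rewrite !exp_frac_neq0 by auto.
  apply Ropp_lt_cancel.
  apply (incr_function (fun u => - ((exp (u * s) - 1) / (exp u - 1))) a b
    (fun u => exp (u * s) * ((1 - s) * exp u + s - exp ((1 - s) * u)) / (exp u - 1) ^ 2));
    auto; intros u Ha Hb; pose proof (exp_minus_1_neq0 u (Hab u Ha Hb)).
  - auto_derive; [easy|].
    replace (exp u) with (exp (u * s) * exp ((1 - s) * u))
      by (rewrite <- exp_plus; f_equal; ring).
    field. now replace (exp (u * s) * exp ((1 - s) * u)) with (exp u)
      by (rewrite <- exp_plus; f_equal; ring).
  - pose proof (exp_convex_lt u (1 - s) (Hab u Ha Hb) ltac:(lra)).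
    apply Rdiv_lt_0_compat; [|rewrite <- Rsqr_pow2; now apply Rsqr_pos_lt].
    apply Rmult_lt_0_compat; [apply exp_pos | lra].
Qed.

Lemma exp_frac_decreasing (u1 u2 s : R) : u1 < u2 -> 0 < s < 1 ->
  exp_frac u2 s < exp_frac u1 s.
Proof.
  intros H12 Hs.
  destruct (Rlt_or_le 0 u1) as [P1|N1].
  - apply (exp_frac_decreasing_on (Finite 0) p_infty); simpl; auto; intros; lra.
  - destruct (Rlt_or_le u2 0) as [N2|P2].
    + apply (exp_frac_decreasing_on m_infty (Finite 0)); simpl; auto; intros; lra.
    + assert (exp_frac u2 s <= s).
      { destruct P2 as [P2|P2]; [left; now apply exp_frac_lt_id|].
        subst. right. apply exp_frac_0. }
      destruct N1 as [N1|N1]; [pose proof (exp_frac_gt_id u1 s N1 Hs); lra|].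
      subst. rewrite exp_frac_0. apply exp_frac_lt_id; lra.
Qed.

Lemma continuous_exp_frac (z : R * R) :
  continuous (fun z : R * R => exp_frac (fst z) (snd z)) z.
Proof.
  destruct z as [u s]. unfold exp_frac.
  apply (continuous_mult (K := R_AbsRing)); [apply (continuous_mult (K := R_AbsRing))|].
  - apply continuous_snd.
  - apply (continuous_comp (fun z : R * R => fst z * snd z)); [|apply continuous_exprel].
    apply (continuous_mult (K := R_AbsRing)); [apply continuous_fst | apply continuous_snd].
  - apply (continuous_comp (fun z : R * R => exprel (fst z))).
    + apply (continuous_comp fst); [apply continuous_fst | apply continuous_exprel].
    + apply continuous_Rinv. apply Rgt_not_eq, exprel_pos.
Qed.

Lemma continuous_RInt_param (f : R -> R -> R) (a b x : R) : a <= b ->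
  (forall t, a <= t <= b -> continuous (fun z : R * R => f (fst z) (snd z)) (x, t)) ->
  (forall y, ex_RInt (f y) a b) ->
  continuous (fun y => RInt (f y) a b) x.
Proof.
  intros Hab Hf Hint. apply filterlim_locally. intros eps.
  assert (Heps' : 0 < eps / (b - a + 1)).
  { apply Rdiv_lt_0_compat; [apply cond_pos | lra]. }
  destruct (uniform_continuity_2d_1d' f a b x) with (eps := mkposreal _ Heps')
    as [delta Hdelta].
  { intros t Ht. apply continuity_2d_pt_filterlim. exact (Hf t Ht). }
  exists delta. intros y Hy. change (Rabs (y - x) < delta) in Hy.
  apply Rabs_lt_between' in Hy. pose proof (cond_pos delta).
  change (Rabs (RInt (f y) a b - RInt (f x) a b) < eps).
  rewrite <- (RInt_minus (V := R_CompleteNormedModule)) by auto.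
  eapply Rle_lt_trans.
  - apply (abs_RInt_le_const _ a b (eps / (b - a + 1))); [exact Hab | |].
    + apply (ex_RInt_minus (V := R_NormedModule)); auto.
    + intros t Ht. left. apply (Hdelta t x t y); try lra.
      rewrite Rminus_diag, Rabs_R0. lra.
  - pose proof (cond_pos eps).
    replace ((b - a) * (eps / (b - a + 1))) with (eps * ((b - a) / (b - a + 1)))
      by (field; lra).
    rewrite <- (Rmult_1_r eps) at 2. apply Rmult_lt_compat_l; [lra|].
    apply Rlt_div_l; lra.
Qed.

Lemma RInt_reflect (f : R -> R) (a : R) : ex_RInt f (- a) a ->
  RInt (fun t => f (- t)) (- a) a = RInt f (- a) a.
Proof.
  intros Hf. apply ex_RInt_swap in Hf. apply is_RInt_unique.
  rewrite <- (opp_RInt_swap (V := R_CompleteNormedModule)) by exact Hf.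
  assert (H : is_RInt f (-1 * - a + 0) (-1 * a + 0) (RInt f a (- a))).
  { replace (-1 * - a + 0) with a by ring. replace (-1 * a + 0) with (- a) by ring.
    now apply (RInt_correct (V := R_CompleteNormedModule)). }
  apply (is_RInt_comp_lin _ (-1) 0), is_RInt_opp in H.
  eapply is_RInt_ext; [|exact H]. intros t _.
  change (- (-1 * f (-1 * t + 0)) = f (- t)).
  replace (-1 * t + 0) with (- t) by ring. ring.
Qed.

Lemma is_RInt_const_plus_exp (a c k : R) : k <> 0 ->
  is_RInt (fun t => a + c * exp (- k * (1 + t))) (-1) 1
    (2 * a + c * (1 - exp (-2 * k)) / k).
Proof.
  intros Hk.
  replace (2 * a + c * (1 - exp (-2 * k)) / k) with
    (minus (a * 1 - c * exp (- k * (1 + 1)) / k) (a * -1 - c * exp (- k * (1 + -1)) / k)).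
  - apply (is_RInt_derive (fun t => a * t - c * exp (- k * (1 + t)) / k)).
    + intros t _. auto_derive; [easy|]. field. exact Hk.
    + intros t _. apply (ex_derive_continuous (K := R_AbsRing) (V := R_NormedModule)).
      auto_derive. easy.
  - change (minus ?x ?y = ?z) with (@eq R (x - y) z). replace (- k * (1 + -1)) with 0 by ring.
    replace (- k * (1 + 1)) with (-2 * k) by ring. rewrite exp_0. field. exact Hk.
Qed.

Lemma decreasing_unique_root (f : R -> R) : (forall x, continuous f x) ->
  (forall x y, x < y -> f y < f x) -> (exists a, 0 < f a) -> (exists b, f b < 0) ->
  exists! z, f z = 0.
Proof.
  intros Hcont Hdecr [a Ha] [b Hb].
  assert (Hab : a < b).
  { destruct (Rlt_or_le a b) as [|[Hba|Hba]]; auto.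
    - pose proof (Hdecr b a Hba). lra.
    - subst. lra. }
  destruct (IVT (opp_fct f) a b) as [z [_ Hz]]; auto; unfold opp_fct; try lra.
  { apply continuity_opp. intros x. apply continuity_pt_filterlim, Hcont. }
  unfold opp_fct in Hz. exists z. split; [lra|].
  intros z' Hz'. destruct (Rtotal_order z z') as [H|[H|H]]; auto.
  - pose proof (Hdecr z z' H). lra.
  - pose proof (Hdecr z' z H). lra.
Qed.

Lemma gfun_exp_frac (m1 m2 t k : R) : m1 <> 0 -> m2 <> 0 ->
  gfun m1 m2 t k = - 2 / m1 + 2 * (/ m1 + / m2) * exp_frac (2 * k) ((1 - t) / 2).
Proof.
  intros H1 H2. unfold gfun. destruct (Req_EM_T k 0) as [->|Hk].
  - rewrite Rmult_0_r, exp_frac_0. field. auto.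
  - rewrite exp_frac_neq0 by lra.
    replace (2 * k * ((1 - t) / 2)) with (k + - k * t) by field.
    replace (2 * k) with (k + k) by ring.
    rewrite !exp_plus, exp_Ropp.
    pose proof (exp_pos k). pose proof (exp_minus_1_neq0 k Hk).
    assert (exp k * exp k - 1 <> 0).
    { replace (exp k * exp k - 1) with ((exp k - 1) * (exp k + 1)) by ring.
      apply Rmult_integral_contrapositive. split; lra. }
    assert (exp k - / exp k <> 0).
    { replace (exp k - / exp k) with ((exp k * exp k - 1) * / exp k) by (field; lra).
      apply Rmult_integral_contrapositive. split; [lra|].
      apply Rinv_neq_0_compat. lra. }
    field. repeat split; auto; lra.
Qed.

Lemma gfun_reflect (m1 m2 t k : R) : gfun m1 m2 t k = - gfun m2 m1 (- t) (- k).
Proof.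
  unfold gfun. destruct (Req_EM_T k 0) as [->|Hk].
  - rewrite Ropp_0. destruct (Req_EM_T 0 0); [|easy]. unfold Rdiv. ring.
  - destruct (Req_EM_T (- k) 0) as [H|_]; [lra|].
    rewrite Ropp_involutive.
    replace (k * - t) with (- k * t) by ring.
    replace (exp (- k) - exp k) with (- (exp k - exp (- k))) by ring.
    unfold Rdiv. rewrite Rinv_opp. ring.
Qed.

Lemma exp_frac_le_exp (u s : R) : 1 <= u -> 0 <= s <= 1 ->
  exp_frac u s <= 2 * exp (- u * (1 - s)).
Proof.
  intros Hu Hs. rewrite exp_frac_neq0 by lra.
  replace (- u * (1 - s)) with (u * s + - u) by ring. rewrite exp_plus, exp_Ropp.
  assert (2 <= exp u) by (pose proof (exp_ineq1_le u); lra).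
  pose proof (exp_pos (u * s)).
  set (X := exp u) in *. set (Y := exp (u * s)) in *.
  enough (0 <= 2 * (Y * / X) - (Y - 1) / (X - 1)) by lra.
  replace (2 * (Y * / X) - (Y - 1) / (X - 1)) with ((Y * (X - 2) + X) / (X * (X - 1)))
    by (field; lra).
  apply Rmult_le_pos; [nra|]. left. apply Rinv_0_lt_compat. nra.
Qed.

Lemma pfun_bounds (r : R) (d : nat) (t : R) : Rabs r < 1 -> -1 <= t <= 1 ->
  (1 - Rabs r) ^ d <= pfun r d t <= (1 + Rabs r) ^ d.
Proof.
  intros Hr Ht. unfold pfun.
  assert (Hrt : Rabs (r * t) <= Rabs r).
  { rewrite Rabs_mult. pose proof (Rabs_pos r).
    assert (Rabs t <= 1) by (apply Rabs_le; lra). nra. }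
  apply Rabs_le_between in Hrt.
  split; apply pow_incr; lra.
Qed.

Lemma pfun_pos (r : R) (d : nat) (t : R) : Rabs r < 1 -> -1 <= t <= 1 ->
  0 < pfun r d t.
Proof.
  intros Hr Ht. eapply Rlt_le_trans; [|apply (pfun_bounds r d t Hr Ht)].
  apply pow_lt. lra.
Qed.

Definition gmoment (m1 m2 r : R) (d : nat) (k : R) : R :=
  RInt (fun t => gfun m1 m2 t k * pfun r d t) (-1) 1.

Section Moment.

Variables (m1 m2 r : R) (d : nat).
Hypotheses (Hm1 : 0 < m1) (Hm2 : 0 < m2).

Lemma continuous_gfun_pfun (z : R * R) :
  continuous (fun z : R * R => gfun m1 m2 (snd z) (fst z) * pfun r d (snd z)) z.
Proof.
  apply (continuous_ext (fun z : R * R =>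
    (- 2 / m1 + 2 * (/ m1 + / m2) * exp_frac (2 * fst z) ((1 - snd z) / 2))
      * pfun r d (snd z))).
  { intros w. rewrite gfun_exp_frac; lra. }
  destruct z as [k t].
  apply (continuous_mult (K := R_AbsRing)).
  - apply (continuous_plus (K := R_AbsRing) (V := R_NormedModule));
      [apply continuous_const | apply (continuous_mult (K := R_AbsRing))];
      [apply continuous_const|].
    apply (continuous_comp_2 (fun z : R * R => 2 * fst z) (fun z : R * R => (1 - snd z) / 2)
      exp_frac); [| |apply continuous_exp_frac].
    + apply (continuous_mult (K := R_AbsRing)); [apply continuous_const | apply continuous_fst].
    + apply (continuous_mult (K := R_AbsRing)); [|apply continuous_const].
      apply (continuous_minus (V := R_NormedModule)); [apply continuous_const | apply continuous_snd].
  - apply (continuous_comp snd); [apply continuous_snd|].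
    apply (ex_derive_continuous (K := R_AbsRing) (V := R_NormedModule)).
    unfold pfun. auto_derive. easy.
Qed.

Lemma continuous_gfun_pfun_t (k t : R) :
  continuous (fun t => gfun m1 m2 t k * pfun r d t) t.
Proof.
  apply (continuous_comp_2 (fun _ : R => k) (fun t : R => t)
    (fun k t => gfun m1 m2 t k * pfun r d t)).
  - apply continuous_const.
  - apply continuous_id.
  - apply continuous_gfun_pfun.
Qed.

Lemma ex_RInt_gfun_pfun (k : R) :
  ex_RInt (fun t => gfun m1 m2 t k * pfun r d t) (-1) 1.
Proof.
  apply (ex_RInt_continuous (V := R_CompleteNormedModule)).
  intros t _. apply continuous_gfun_pfun_t.
Qed.

Lemma continuous_gmoment (k : R) : continuous (gmoment m1 m2 r d) k.
Proof.
  apply (continuous_RInt_param (fun k t => gfun m1 m2 t k * pfun r d t)); [lra | |].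
  - intros t _. apply continuous_gfun_pfun.
  - apply ex_RInt_gfun_pfun.
Qed.

Hypothesis Hr : Rabs r < 1.

Lemma gmoment_decreasing (k1 k2 : R) : k1 < k2 ->
  gmoment m1 m2 r d k2 < gmoment m1 m2 r d k1.
Proof.
  intros Hk. apply RInt_lt; [lra | intros; apply continuous_gfun_pfun_t ..|].
  intros t Ht. rewrite !gfun_exp_frac by lra.
  pose proof (pfun_pos r d t Hr ltac:(lra)).
  assert (exp_frac (2 * k2) ((1 - t) / 2) < exp_frac (2 * k1) ((1 - t) / 2))
    by (apply exp_frac_decreasing; lra).
  assert (0 < / m1 + / m2)
    by (pose proof (Rinv_0_lt_compat m1 Hm1); pose proof (Rinv_0_lt_compat m2 Hm2); lra).
  apply Rmult_lt_compat_r; nra.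
Qed.

Lemma gmoment_neg : exists k, gmoment m1 m2 r d k < 0.
Proof.
  set (A := / m1). set (B := / m2).
  set (m0 := (1 - Rabs r) ^ d). set (M := (1 + Rabs r) ^ d).
  assert (HA : 0 < A) by (apply Rinv_0_lt_compat; lra).
  assert (HB : 0 < B) by (apply Rinv_0_lt_compat; lra).
  assert (Hm0 : 0 < m0) by (apply pow_lt; lra).
  assert (HM : 0 < M) by (apply pow_lt; pose proof (Rabs_pos r); lra).
  set (k := (A + B) * M / (A * m0) + 1).
  assert (Hk : (A + B) * M < A * m0 * k /\ 1 <= k).
  { assert (0 < (A + B) * M / (A * m0)) by (apply Rdiv_lt_0_compat; nra).
    unfold k. split; [|lra]. rewrite Rmult_plus_distr_l.
    replace (A * m0 * ((A + B) * M / (A * m0))) with ((A + B) * M) by (field; nra). nra. }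
  exists k.
  pose proof (is_RInt_const_plus_exp (- 2 * A * m0) (4 * (A + B) * M) k ltac:(lra)) as Hbound.
  apply Rle_lt_trans with (2 * (- 2 * A * m0) + 4 * (A + B) * M * (1 - exp (-2 * k)) / k).
  - rewrite <- (is_RInt_unique _ _ _ _ Hbound).
    apply RInt_le; [lra | apply ex_RInt_gfun_pfun | eexists; exact Hbound |].
    intros t Ht. rewrite gfun_exp_frac by lra. unfold Rdiv at 1. fold A B.
    destruct (pfun_bounds r d t Hr ltac:(lra)) as [Hp0 HpM]. fold m0 M in Hp0, HpM.
    assert (Hh : exp_frac (2 * k) ((1 - t) / 2) <= 2 * exp (- k * (1 + t))).
    { replace (- k * (1 + t)) with (- (2 * k) * (1 - (1 - t) / 2)) by field.
      apply exp_frac_le_exp; lra. }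
    pose proof (exp_pos (- k * (1 + t))).
    set (h := exp_frac (2 * k) ((1 - t) / 2)) in *.
    set (e := exp (- k * (1 + t))) in *. set (p := pfun r d t) in *.
    assert (h * p <= 2 * e * M) by nra.
    assert ((A + B) * (h * p) <= (A + B) * (2 * e * M)) by (apply Rmult_le_compat_l; lra).
    assert (A * m0 <= A * p) by (apply Rmult_le_compat_l; lra).
    nra.
  - pose proof (exp_pos (-2 * k)).
    apply Rmult_lt_reg_r with k; [lra|].
    replace ((2 * (- 2 * A * m0) + 4 * (A + B) * M * (1 - exp (-2 * k)) / k) * k)
      with (- 4 * (A * m0 * k) + 4 * (A + B) * M * (1 - exp (-2 * k))) by (field; lra).
    assert (0 < (A + B) * M * exp (-2 * k)) by (apply Rmult_lt_0_compat; nra).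
    lra.
Qed.

End Moment.

Lemma gmoment_reflect (m1 m2 r : R) (d : nat) (k : R) : 0 < m1 -> 0 < m2 ->
  gmoment m1 m2 r d k = - gmoment m2 m1 (- r) d (- k).
Proof.
  intros Hm1 Hm2. unfold gmoment.
  set (G := fun t => gfun m2 m1 t (- k) * pfun (- r) d t).
  transitivity (RInt (fun t => - G (- t)) (-1) 1).
  { apply RInt_ext. intros t _. change (?x = ?y) with (@eq R x y). unfold G, pfun.
    rewrite gfun_reflect. replace (- r * - t) with (r * t) by ring. ring. }
  change (-1) with (Ropp 1).
  rewrite (RInt_reflect (fun t => - G t)).
  - apply (RInt_opp (V := R_CompleteNormedModule)), ex_RInt_gfun_pfun; assumption.
  - apply (ex_RInt_opp (V := R_CompleteNormedModule)), ex_RInt_gfun_pfun; assumption.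
Qed.

Lemma gmoment_pos (m1 m2 r : R) (d : nat) : 0 < m1 -> 0 < m2 -> Rabs r < 1 ->
  exists k, 0 < gmoment m1 m2 r d k.
Proof.
  intros Hm1 Hm2 Hr.
  destruct (gmoment_neg m2 m1 (- r) d) as [k Hk]; [assumption.. | now rewrite Rabs_Ropp |].
  exists (- k). rewrite gmoment_reflect, !Ropp_involutive by assumption. lra.
Qed.

Theorem lemmaA1 (m1 m2 : nat) (r : R) (d : nat)
  (hm1 : (0 < m1)%nat) (hm2 : (0 < m2)%nat)
  (hr0 : 0 < Rabs r) (hr1 : Rabs r < 1) (hd : (0 < d)%nat) :
  exists! k : R,
    exists pr : Riemann_integrable
                  (fun t => gfun (INR m1) (INR m2) t k * pfun r d t) (-1) 1,
      RiemannInt pr = 0.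
Proof.
  apply lt_0_INR in hm1, hm2.
  destruct (decreasing_unique_root (gmoment (INR m1) (INR m2) r d)) as [k [Hk Huniq]].
  - apply continuous_gmoment; assumption.
  - intros k1 k2. apply gmoment_decreasing; assumption.
  - apply gmoment_pos; assumption.
  - apply gmoment_neg; assumption.
  - exists k. split.
    + exists (ex_RInt_Reals_0 _ _ _ (ex_RInt_gfun_pfun _ _ r d hm1 hm2 k)).
      rewrite <- RInt_Reals. exact Hk.
    + intros k' [pr Hpr]. apply Huniq.
      unfold gmoment. rewrite (RInt_Reals _ _ _ pr). exact Hpr.
Qed.
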